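(* Let $A,B\in\mathbb{T}^{m\times n}$, with every column of $A$ and every row of $B$ containing at least one finite entry, and let $F=A^\sharp\circ B$, i.e. $F(x)=A^\sharp(B\odot x)$. Suppose there exists $v\in\mathbb{R}^n$ such that $F(v)=\rho(F)+v$. Then \[ R(F)\le (n-1)\bigl(|\rho(F)|+W\bigr). \]
   Context: $\mathbb{T}=\mathbb{R}\cup\{-\infty\}$. $(B\odot x)_i=\max_j(B_{ij}+x_j)$; $A^\sharp(y)_j=\min_i(-A_{ij}+y_i)$ with $(+\infty)+(-\infty)=+\infty$. A bias vector is $v\in\mathbb{R}^n$ with $F(v)=\lambda+v$ for some $\lambda\in\mathbb{R}$ (entrywise addition); this $\lambda=\rho(F)$ is unique. $\|x\|_H=\max_ix_i-\min_ix_i$, and $R(F)=\inf\{\|u\|_H: u\in\mathbb{R}^n,\ F(u)=\rho(F)+u\}$. $W=\max\{|A_{ij}-B_{ih}|: A_{ij}\ne-\infty,\ B_{ih}\ne-\infty,\ i\in[m],\ j,h\in[n]\}$. *)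

From Stdlib Require Import Reals Lra List.
Import ListNotations.
Open Scope R_scope.

(* Extended reals R ∪ {-oo, +oo}. Tropical entries T = R ∪ {-oo} are
   represented by option R (None = -oo) and embedded into ER. *)
Inductive ER := NegInf | Fin (r : R) | PosInf.

Definition toE (a : option R) : ER :=
  match a with None => NegInf | Some r => Fin r end.

Definition eneg (a : ER) : ER :=
  match a with NegInf => PosInf | Fin r => Fin (- r) | PosInf => NegInf end.

(* addition with the convention (+oo) + (-oo) = +oo *)
Definition eadd (a b : ER) : ER :=
  match a, b with
  | PosInf, _ | _, PosInf => PosInf
  | NegInf, _ | _, NegInf => NegInf
  | Fin x, Fin y => Fin (x + y)
  end.

Definition emax (a b : ER) : ER :=
  match a, b with
  | PosInf, _ | _, PosInf => PosInf
  | NegInf, c | c, NegInf => c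
  | Fin x, Fin y => Fin (Rmax x y)
  end.

Definition emin (a b : ER) : ER :=
  match a, b with
  | NegInf, _ | _, NegInf => NegInf
  | PosInf, c | c, PosInf => c
  | Fin x, Fin y => Fin (Rmin x y)
  end.

(* An m x n tropical matrix: entry (i,j) for i < m, j < n. *)
Definition tmat := nat -> nat -> option R.

Definition tmul (n : nat) (B : tmat) (x : nat -> R) (i : nat) : ER :=
  fold_right emax NegInf (map (fun j => eadd (toE (B i j)) (Fin (x j))) (seq 0 n)).

Definition sharp (m : nat) (A : tmat) (y : nat -> ER) (j : nat) : ER :=
  fold_right emin PosInf (map (fun i => eadd (eneg (toE (A i j))) (y i)) (seq 0 m)).

Definition Fmap (m n : nat) (A B : tmat) (x : nat -> R) : nat -> ER :=
  sharp m A (tmul n B x).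

Definition is_bias (m n : nat) (A B : tmat) (u : nat -> R) (lam : R) : Prop :=
  forall j, (j < n)%nat -> Fmap m n A B u j = Fin (lam + u j).

Definition hmax (n : nat) (x : nat -> R) : R := fold_right Rmax (x 0%nat) (map x (seq 0 n)).
Definition hmin (n : nat) (x : nat -> R) : R := fold_right Rmin (x 0%nat) (map x (seq 0 n)).
Definition hilbert (n : nat) (x : nat -> R) : R := hmax n x - hmin n x.

(* W = max |A_ij - B_ih| over finite A_ij, B_ih (0 used as the neutral
   element of the max; all terms are >= 0 and the index set is nonempty
   under the hypotheses of the theorem). *)
Definition Wterm (A B : tmat) (i j h : nat) : R :=
  match A i j, B i h with
  | Some a, Some b => Rabs (a - b)
  | _, _ => 0
  end.
Definition Wconst (m n : nat) (A B : tmat) : R :=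
  fold_right Rmax 0 (map (fun i =>
    fold_right Rmax 0 (map (fun j =>
      fold_right Rmax 0 (map (fun h => Wterm A B i j h) (seq 0 n))) (seq 0 n))) (seq 0 m)).

Definition is_inf (S : R -> Prop) (r : R) : Prop :=
  (forall s, S s -> r <= s) /\ (forall r', (forall s, S s -> r' <= s) -> r' <= r).

(* The set {||u||_H : F(u) = lam + u}; R(F) is its infimum. *)
Definition bias_norms (m n : nat) (A B : tmat) (lam : R) (s : R) : Prop :=
  exists u, is_bias m n A B u lam /\ s = hilbert n u.

(* A vector u is a bias vector iff, for every j, finitely many difference
   constraints u_j - u_h <= d or u_h - u_j <= d hold, with thresholds
   d = +-(b_ih - a_ij - rho), all of absolute value at most c = |rho| + W.
   Shrinking every gap between consecutive distinct values of a bias vector v to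
   min(gap, c) changes no difference across such a threshold, hence yields another
   bias vector; its n values span at most n - 1 gaps of size at most c. *)

From Stdlib Require Import Reals Lra Lia List Wf_nat.
Open Scope R_scope.

Definition ERle (a b : ER) : Prop :=
  match a, b with
  | NegInf, _ | _, PosInf => True
  | Fin x, Fin y => x <= y
  | _, _ => False
  end.

Lemma Fin_eq_ERle (a : ER) (r : R) : a = Fin r <-> ERle (Fin r) a /\ ERle a (Fin r).
Proof.
  destruct a; simpl; split; try intuition discriminate.
  - intros [= ->]; lra.
  - intros ?; f_equal; lra.
Qed.

Lemma Fin_le_emax r a b : ERle (Fin r) (emax a b) <-> ERle (Fin r) a \/ ERle (Fin r) b.
Proof. destruct a, b; simpl; try tauto; unfold Rmax; destruct Rle_dec; lra. Qed.
Lemma emax_le_Fin r a b : ERle (emax a b) (Fin r) <-> ERle a (Fin r) /\ ERle b (Fin r).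
Proof. destruct a, b; simpl; try tauto; unfold Rmax; destruct Rle_dec; lra. Qed.
Lemma Fin_le_emin r a b : ERle (Fin r) (emin a b) <-> ERle (Fin r) a /\ ERle (Fin r) b.
Proof. destruct a, b; simpl; try tauto; unfold Rmin; destruct Rle_dec; lra. Qed.
Lemma emin_le_Fin r a b : ERle (emin a b) (Fin r) <-> ERle a (Fin r) \/ ERle b (Fin r).
Proof. destruct a, b; simpl; try tauto; unfold Rmin; destruct Rle_dec; lra. Qed.

Section Folds.
Variables (f : nat -> ER) (r : R).

Lemma Fin_le_fold_emax (l : list nat) :
  ERle (Fin r) (fold_right emax NegInf (map f l)) <-> exists k, In k l /\ ERle (Fin r) (f k).
Proof.
  induction l as [|k l IH]; cbn [fold_right map In]; [simpl; firstorder|].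
  rewrite Fin_le_emax, IH; firstorder congruence.
Qed.

Lemma fold_emax_le_Fin (l : list nat) :
  ERle (fold_right emax NegInf (map f l)) (Fin r) <-> forall k, In k l -> ERle (f k) (Fin r).
Proof.
  induction l as [|k l IH]; cbn [fold_right map In]; [simpl; firstorder|].
  rewrite emax_le_Fin, IH; firstorder congruence.
Qed.

Lemma Fin_le_fold_emin (l : list nat) :
  ERle (Fin r) (fold_right emin PosInf (map f l)) <-> forall k, In k l -> ERle (Fin r) (f k).
Proof.
  induction l as [|k l IH]; cbn [fold_right map In]; [simpl; firstorder|].
  rewrite Fin_le_emin, IH; firstorder congruence.
Qed.

Lemma fold_emin_le_Fin (l : list nat) :
  ERle (fold_right emin PosInf (map f l)) (Fin r) <-> exists k, In k l /\ ERle (f k) (Fin r).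
Proof.
  induction l as [|k l IH]; cbn [fold_right map In]; [simpl; firstorder|].
  rewrite emin_le_Fin, IH; firstorder congruence.
Qed.

End Folds.

Lemma in_seq0 n k : In k (seq 0 n) <-> (k < n)%nat.
Proof. rewrite in_seq; lia. Qed.

Lemma Fin_le_entry_add (o : option R) (x s : R) :
  ERle (Fin s) (eadd (toE o) (Fin x)) <-> exists b, o = Some b /\ s <= b + x.
Proof. destruct o; simpl; firstorder congruence. Qed.

Lemma entry_add_le_Fin (o : option R) (x s : R) :
  ERle (eadd (toE o) (Fin x)) (Fin s) <-> forall b, o = Some b -> b + x <= s.
Proof. destruct o; simpl; firstorder congruence. Qed.

Lemma Fin_le_neg_entry_add (o : option R) (y : ER) (r : R) :
  ERle (Fin r) (eadd (eneg (toE o)) y) <-> forall a, o = Some a -> ERle (Fin (r + a)) y.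
Proof.
  destruct o as [a|]; simpl; [|firstorder discriminate].
  transitivity (ERle (Fin (r + a)) y); [destruct y; simpl; try tauto; split; intros; lra|].
  split; [intros H ? [= <-]; exact H | intros H; exact (H a eq_refl)].
Qed.

Lemma neg_entry_add_le_Fin (o : option R) (y : ER) (r : R) :
  ERle (eadd (eneg (toE o)) y) (Fin r) <-> exists a, o = Some a /\ ERle y (Fin (r + a)).
Proof.
  destruct o as [a|]; simpl; [|firstorder discriminate].
  transitivity (ERle y (Fin (r + a))); [destruct y; simpl; try tauto; split; intros; lra|].
  split; [intros H; exists a; auto | intros [? [[= <-] H]]; exact H].
Qed.

Lemma Fin_le_tmul n B x i s :
  ERle (Fin s) (tmul n B x i) <-> exists h b, (h < n)%nat /\ B i h = Some b /\ s <= b + x h.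
Proof.
  unfold tmul; rewrite Fin_le_fold_emax.
  setoid_rewrite in_seq0; setoid_rewrite Fin_le_entry_add; firstorder.
Qed.

Lemma tmul_le_Fin n B x i s :
  ERle (tmul n B x i) (Fin s) <-> forall h b, (h < n)%nat -> B i h = Some b -> b + x h <= s.
Proof.
  unfold tmul; rewrite fold_emax_le_Fin.
  setoid_rewrite in_seq0; setoid_rewrite entry_add_le_Fin; firstorder.
Qed.

Lemma Fin_le_sharp m A y j r :
  ERle (Fin r) (sharp m A y j) <->
  forall i a, (i < m)%nat -> A i j = Some a -> ERle (Fin (r + a)) (y i).
Proof.
  unfold sharp; rewrite Fin_le_fold_emin.
  setoid_rewrite in_seq0; setoid_rewrite Fin_le_neg_entry_add; firstorder.
Qed.

Lemma sharp_le_Fin m A y j r :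
  ERle (sharp m A y j) (Fin r) <->
  exists i a, (i < m)%nat /\ A i j = Some a /\ ERle (y i) (Fin (r + a)).
Proof.
  unfold sharp; rewrite fold_emin_le_Fin.
  setoid_rewrite in_seq0; setoid_rewrite neg_entry_add_le_Fin; firstorder.
Qed.

Definition bias_constraints (m n : nat) (A B : tmat) (u : nat -> R) (lam : R) : Prop :=
  forall j, (j < n)%nat ->
    (forall i a, (i < m)%nat -> A i j = Some a ->
       exists h b, (h < n)%nat /\ B i h = Some b /\ lam + u j + a <= b + u h) /\
    (exists i a, (i < m)%nat /\ A i j = Some a /\
       forall h b, (h < n)%nat -> B i h = Some b -> b + u h <= lam + u j + a).

Lemma is_bias_constraints m n A B u lam :
  is_bias m n A B u lam <-> bias_constraints m n A B u lam.
Proof.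
  unfold is_bias, bias_constraints, Fmap.
  setoid_rewrite Fin_eq_ERle; setoid_rewrite Fin_le_sharp; setoid_rewrite sharp_le_Fin.
  setoid_rewrite Fin_le_tmul; setoid_rewrite tmul_le_Fin; reflexivity.
Qed.

Definition gap_contraction (c : R) (v u : nat -> R) (l : list nat) : Prop :=
  forall j h, In j l -> In h l -> v j <= v h ->
    Rmin (v h - v j) c <= u h - u j <= v h - v j.

Lemma Rabs_le_bounds x c : Rabs x <= c -> - c <= x <= c.
Proof. pose proof (Rle_abs x); pose proof (Rle_abs (- x)); rewrite Rabs_Ropp in *; lra. Qed.

Lemma Rmin_subadditive a b c : 0 <= a -> 0 <= b -> 0 <= c ->
  Rmin (a + b) c <= Rmin a c + Rmin b c.
Proof. intros; unfold Rmin; repeat destruct Rle_dec; lra. Qed.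

Lemma gap_contraction_diff_le c v u l j h d :
  gap_contraction c v u l -> In j l -> In h l -> Rabs d <= c ->
  v j - v h <= d -> u j - u h <= d.
Proof.
  intros Hgap Hj Hh Hd Hvd; apply Rabs_le_bounds in Hd.
  destruct (Rle_dec (v j) (v h)) as [Hjh|Hhj].
  - specialize (Hgap j h Hj Hh Hjh).
    assert (- d <= Rmin (v h - v j) c) by (apply Rmin_glb; lra); lra.
  - specialize (Hgap h j Hh Hj ltac:(lra)); lra.
Qed.

Lemma bias_constraints_transfer m n A B lam c v u :
  (forall i j h a b, (i < m)%nat -> (j < n)%nat -> (h < n)%nat ->
     A i j = Some a -> B i h = Some b -> Rabs (lam + a - b) <= c) ->
  gap_contraction c v u (seq 0 n) ->
  bias_constraints m n A B v lam -> bias_constraints m n A B u lam.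
Proof.
  intros HW Hgap Hv j Hj; destruct (Hv j Hj) as [Hsup [i [a [Hi [Ha Hinf]]]]]; split.
  - intros i' a' Hi' Ha'; destruct (Hsup i' a' Hi' Ha') as [h [b [Hh [Hb Hvb]]]].
    exists h, b; repeat split; auto.
    enough (u j - u h <= b - a' - lam) by lra.
    apply (gap_contraction_diff_le c v u (seq 0 n)); try apply in_seq0; auto; try lra.
    rewrite <- Rabs_Ropp; replace (- (b - a' - lam)) with (lam + a' - b) by ring; eauto.
  - exists i, a; repeat split; auto; intros h b Hh Hb.
    enough (u h - u j <= lam + a - b) by lra.
    apply (gap_contraction_diff_le c v u (seq 0 n)); try apply in_seq0; eauto.
    specialize (Hinf h b Hh Hb); lra.
Qed.

Lemma exists_argmax (f : nat -> R) (l : list nat) :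
  exists M, forall k, In k l -> In M l /\ f k <= f M.
Proof.
  induction l as [|a l [M HM]]; [exists 0%nat; contradiction|].
  destruct (Rle_dec (f a) (f M)) as [HaM|HMa]; [destruct (in_dec Nat.eq_dec M l) as [Hin|Hout]|].
  - exists M; intros k Hk; split; [now right|].
    destruct Hk as [<-|Hk]; [exact HaM|apply HM, Hk].
  - exists a; intros k Hk; split; [now left|].
    destruct Hk as [<-|Hk]; [lra|now destruct (HM k Hk)].
  - exists a; intros k Hk; split; [now left|].
    destruct Hk as [<-|Hk]; [lra|specialize (HM k Hk); lra].
Qed.

Section LiftTop.

Variables (c : R) (v u : nat -> R) (l l' : list nat) (M T : nat).
Hypotheses (Hc : 0 <= c) (HM : forall k, In k l -> v k <= v M)
  (Hl' : forall k, In k l' <-> In k l /\ v k < v M)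
  (HT : forall k, In k l' -> In T l' /\ v k <= v T)
  (Hgap : gap_contraction c v u l').

Definition lift_top (k : nat) : R :=
  if Rlt_dec (v k) (v M) then u k else u T + Rmin (v M - v T) c.

Lemma gap_contraction_lift_top : gap_contraction c v lift_top l.
Proof.
  intros j h Hj Hh Hjh; unfold lift_top.
  destruct (Rlt_dec (v j) (v M)) as [Jb|Jt], (Rlt_dec (v h) (v M)) as [Hb|Ht].
  - apply Hgap; try apply Hl'; auto.
  - assert (Hjl' : In j l') by (apply Hl'; auto).
    destruct (HT j Hjl') as [HTl' HjT]; pose proof (proj2 (proj1 (Hl' T) HTl')).
    pose proof (Hgap j T Hjl' HTl' HjT).
    pose proof (Rmin_subadditive (v T - v j) (v M - v T) c ltac:(lra) ltac:(lra) Hc).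
    pose proof (Rmin_l (v M - v T) c); pose proof (HM h Hh).
    replace (v T - v j + (v M - v T)) with (v M - v j) in * by ring.
    replace (v h) with (v M) by lra; lra.
  - lra.
  - pose proof (HM h Hh); pose proof (HM j Hj); pose proof (Rmin_l (v h - v j) c); lra.
Qed.

Lemma lift_top_spread (K : R) : 0 <= K + c ->
  (forall j h, In j l' -> In h l' -> u h - u j <= K) ->
  forall j h, In j l -> In h l -> lift_top h - lift_top j <= K + c.
Proof.
  intros HK Hspread j h Hj Hh; unfold lift_top.
  destruct (Rlt_dec (v j) (v M)) as [Jb|Jt], (Rlt_dec (v h) (v M)) as [Hb|Ht].
  - pose proof (Hspread j h ltac:(apply Hl'; auto) ltac:(apply Hl'; auto)); lra.
  - assert (Hjl' : In j l') by (apply Hl'; auto).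
    pose proof (Hspread j T Hjl' (proj1 (HT j Hjl'))).
    pose proof (Rmin_r (v M - v T) c); lra.
  - assert (Hhl' : In h l') by (apply Hl'; auto).
    destruct (HT h Hhl') as [HTl' HhT]; pose proof (proj2 (proj1 (Hl' T) HTl')).
    pose proof (proj1 (Hgap h T Hhl' HTl' HhT)).
    assert (0 <= Rmin (v T - v h) c) by (apply Rmin_glb; lra).
    assert (0 <= Rmin (v M - v T) c) by (apply Rmin_glb; lra).
    lra.
  - lra.
Qed.

End LiftTop.

Lemma gap_compression (c : R) (v : nat -> R) (l : list nat) : 0 <= c ->
  exists u, gap_contraction c v u l /\
    forall j h, In j l -> In h l -> u h - u j <= (INR (length l) - 1) * c.
Proof.
  intros Hc; remember (length l) as N eqn:HN; revert l HN.
  induction N as [N IH] using lt_wf_ind; intros l ->.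
  destruct l as [|k0 l0]; [exists v; split; intros ? ? []|].
  remember (k0 :: l0) as l eqn:Hl.
  destruct (exists_argmax v l) as [M HM].
  assert (HMl : In M l) by (apply (HM k0); subst; apply in_eq).
  set (below k := if Rlt_dec (v k) (v M) then true else false).
  set (l' := filter below l).
  assert (Hl' : forall k, In k l' <-> In k l /\ v k < v M).
  { intros k; unfold l'; rewrite filter_In; unfold below.
    destruct Rlt_dec; intuition discriminate. }
  assert (Hlen : (length l' < length l)%nat).
  { pose proof (filter_length below l) as Hsum; fold l' in Hsum.
    assert (HMtop : In M (filter (fun k => negb (below k)) l)).
    { apply filter_In; unfold below; destruct Rlt_dec; auto; lra. }
    destruct (filter (fun k => negb (below k)) l); [contradiction|simpl in Hsum; lia]. }
  destruct (IH _ Hlen l' eq_refl) as [u' [Hgap' Hspread']].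
  destruct (exists_argmax v l') as [T HT].
  assert (HMub : forall k, In k l -> v k <= v M) by (intros k Hk; apply (HM k Hk)).
  exists (lift_top c v u' M T); split; [now apply gap_contraction_lift_top with l'|].
  intros j h Hj Hh; eapply Rle_trans.
  - apply (lift_top_spread c v u' l l' M T); auto.
    pose proof (pos_INR (length l')); nra.
  - assert (INR (length l') + 1 <= INR (length l)) by (rewrite <- S_INR; apply le_INR; lia).
    nra.
Qed.

Lemma fold_right_Rmax_attained d l :
  fold_right Rmax d l = d \/ In (fold_right Rmax d l) l.
Proof.
  induction l as [|a l IH]; simpl; auto.
  destruct (Rle_dec a (fold_right Rmax d l)).
  - rewrite Rmax_right by assumption; tauto.
  - rewrite Rmax_left by lra; auto.
Qed.

Lemma fold_right_Rmin_attained d l :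
  fold_right Rmin d l = d \/ In (fold_right Rmin d l) l.
Proof.
  induction l as [|a l IH]; simpl; auto.
  destruct (Rle_dec a (fold_right Rmin d l)).
  - rewrite Rmin_left by assumption; auto.
  - rewrite Rmin_right by lra; tauto.
Qed.

Lemma fold_right_Rmax_ub d l y : In y l -> y <= fold_right Rmax d l.
Proof.
  induction l as [|a l IH]; simpl; [tauto|].
  intros [<-|Hy]; [apply Rmax_l|eapply Rle_trans; [apply IH, Hy|apply Rmax_r]].
Qed.

Lemma fold_right_Rmax_default d l : d <= fold_right Rmax d l.
Proof. induction l; simpl; [lra|eapply Rle_trans; [eassumption|apply Rmax_r]]. Qed.

Lemma attained_at_index (n : nat) (x : nat -> R) (s : R) : (1 <= n)%nat ->
  s = x 0%nat \/ In s (map x (seq 0 n)) -> exists k, (k < n)%nat /\ s = x k.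
Proof.
  intros Hn [Hs|Hs]; [exists 0%nat; split; [lia|exact Hs]|].
  apply in_map_iff in Hs as [k [<- Hk]]; exists k; split; [apply in_seq0|]; auto.
Qed.

Lemma hilbert_le (n : nat) (x : nat -> R) (K : R) : (1 <= n)%nat ->
  (forall j h, (j < n)%nat -> (h < n)%nat -> x h - x j <= K) -> hilbert n x <= K.
Proof.
  intros Hn Hx; unfold hilbert, hmax, hmin.
  destruct (attained_at_index n x _ Hn (fold_right_Rmax_attained _ _)) as [h [Hh ->]].
  destruct (attained_at_index n x _ Hn (fold_right_Rmin_attained _ _)) as [j [Hj ->]].
  auto.
Qed.

Lemma Wconst_nonneg m n A B : 0 <= Wconst m n A B.
Proof. apply fold_right_Rmax_default. Qed.

Lemma Wterm_le_Wconst m n A B i j h : (i < m)%nat -> (j < n)%nat -> (h < n)%nat ->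
  Wterm A B i j h <= Wconst m n A B.
Proof.
  intros Hi Hj Hh; unfold Wconst.
  eapply Rle_trans; [|apply fold_right_Rmax_ub, in_map, in_seq0, Hi].
  eapply Rle_trans; [|apply fold_right_Rmax_ub, in_map, in_seq0, Hj].
  apply fold_right_Rmax_ub, (in_map (fun h => Wterm A B i j h)), in_seq0, Hh.
Qed.

Lemma shifted_entry_gap_le m n A B lam i j h a b :
  (i < m)%nat -> (j < n)%nat -> (h < n)%nat -> A i j = Some a -> B i h = Some b ->
  Rabs (lam + a - b) <= Rabs lam + Wconst m n A B.
Proof.
  intros Hi Hj Hh Ha Hb.
  pose proof (Wterm_le_Wconst m n A B i j h Hi Hj Hh) as HW; unfold Wterm in HW; rewrite Ha, Hb in HW.
  replace (lam + a - b) with (lam + (a - b)) by ring.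
  eapply Rle_trans; [apply Rabs_triang|lra].
Qed.

Theorem mainTheorem12 (m n : nat) (A B : tmat)
  (Hn : (1 <= n)%nat)
  (HA : forall j, (j < n)%nat -> exists i, (i < m)%nat /\ A i j <> None)
  (HB : forall i, (i < m)%nat -> exists j, (j < n)%nat /\ B i j <> None)
  (v : nat -> R) (rho : R) (Hv : is_bias m n A B v rho) :
  forall RF : R, is_inf (bias_norms m n A B rho) RF ->
  RF <= (INR n - 1) * (Rabs rho + Wconst m n A B).
Proof.
  intros RF [HRF _].
  set (c := Rabs rho + Wconst m n A B).
  assert (Hc : 0 <= c) by (pose proof (Rabs_pos rho); pose proof (Wconst_nonneg m n A B); unfold c; lra).
  destruct (gap_compression c v (seq 0 n) Hc) as [u [Hgap Hspread]].
  assert (Hu : is_bias m n A B u rho).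
  { apply is_bias_constraints, (bias_constraints_transfer m n A B rho c v); auto.
    - exact (shifted_entry_gap_le m n A B rho).
    - apply is_bias_constraints, Hv. }
  apply Rle_trans with (hilbert n u); [apply HRF; exists u; auto|].
  apply hilbert_le; [exact Hn|]; intros j h Hj Hh.
  rewrite <- (length_seq n 0); apply Hspread; apply in_seq0; auto.
Qed.
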